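(* Consider an instance of additive multislope ski rental with states $0,\dots,k$, buying costs $b_0<b_1<\dots<b_k$ and rental rates $r_0>r_1>\dots>r_k\ge0$, such that $s_1<\dots<s_k$ where $s_i=\frac{b_i-b_{i-1}}{r_{i-1}-r_i}$. Let $c\ge1$. If there exists a $c$-competitive prudent profile, then there exists a $c$-competitive tight profile.
   Context: A profile is a vector $p(t)=(p_0(t),\dots,p_k(t))$ of nonnegative functions of $t\ge0$ with $\sum_ip_i(t)=1$ for all $t$ ($p_i(t)$ = probability of being in state $i$ at time $t$). Define $B_p(t)=\sum_ip_i(t)b_i$, $R_p(t)=\sum_ip_i(t)r_i$, $X_p(t)=B_p(t)+\int_0^tR_p(z)\,dz$ and $\textsc{opt}(t)=\min_i(b_i+r_it)$. A profile is $c$-competitive if $X_p(t)\le c\,\textsc{opt}(t)$ for all $t\ge0$. It is prudent if at every time the set $\{i:p_i(t)>0\}$ is either a single slope or two consecutive slopes. A prudent $c$-competitive profile $p$ is tight if $X_p(t)=c\cdot\textsc{opt}(t)$ for all $t$ with $p_k(t)<1$. *)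

From HB Require Import structures.
From mathcomp Require Import all_boot all_order all_algebra.
From mathcomp Require Import all_classical all_reals all_analysis.
Set Implicit Arguments. Unset Strict Implicit. Unset Printing Implicit Defensive.
Import Order.TTheory GRing.Theory Num.Theory.
Local Open Scope classical_set_scope.
Local Open Scope ring_scope.

Section SkiRental.
Variable R : realType.

(* states 0..k ; b i = buying cost, r i = rental rate, p i t = probability
   of being in state i at time t. *)

Definition slope_s (b r : nat -> R) (i : nat) : R :=
  (b i - b i.-1) / (r i.-1 - r i).

Definition valid_instance (k : nat) (b r : nat -> R) : Prop :=
  0 <= b 0%N /\
  (forall i, (i < k)%N -> b i < b i.+1) /\
  (forall i, (i < k)%N -> r i.+1 < r i) /\
  0 <= r k /\
  (forall i, (1 <= i)%N -> (i < k)%N -> slope_s b r i < slope_s b r i.+1).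

Definition profile (k : nat) (p : nat -> R -> R) : Prop :=
  (forall i, (i <= k)%N -> measurable_fun setT (p i)) /\
  (forall i t, (i <= k)%N -> 0 <= t -> 0 <= p i t) /\
  (forall t, 0 <= t -> \sum_(i < k.+1) p i t = 1).

Definition B_p (k : nat) (b : nat -> R) (p : nat -> R -> R) (t : R) : R :=
  \sum_(i < k.+1) p i t * b i.

Definition R_p (k : nat) (r : nat -> R) (p : nat -> R -> R) (t : R) : R :=
  \sum_(i < k.+1) p i t * r i.

Definition X_p (k : nat) (b r : nat -> R) (p : nat -> R -> R) (t : R) : R :=
  B_p k b p t + Rintegral lebesgue_measure `[0, t] (R_p k r p).

Definition opt (k : nat) (b r : nat -> R) (t : R) : R :=
  \big[Num.min/(b 0%N + r 0%N * t)]_(i < k.+1) (b i + r i * t).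

Definition competitive (k : nat) (b r : nat -> R) (c : R)
    (p : nat -> R -> R) : Prop :=
  profile k p /\ forall t, 0 <= t -> X_p k b r p t <= c * opt k b r t.

Definition prudent (k : nat) (p : nat -> R -> R) : Prop :=
  profile k p /\
  forall t, 0 <= t -> exists i : nat, forall j, (j <= k)%N -> 0 < p j t ->
    j = i \/ j = i.+1.

Definition tight (k : nat) (b r : nat -> R) (c : R) (p : nat -> R -> R)
  : Prop :=
  prudent k p /\ competitive k b r c p /\
  forall t, 0 <= t -> p k t < 1 -> X_p k b r p t = c * opt k b r t.

End SkiRental.

(* A prudent distribution is determined by its expected buying cost [x], and
   its rental rate is then [prudent_rate x], a continuous nonincreasing
   function of [x].  A prudent profile is therefore tight exactly when its
   integrated rent [I] solves
     [I t = int_0^t prudent_rate (c * opt s - I s) ds],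
   its buying cost being [c * opt - I].  The right-hand side is monotone in
   [I], so the Picard iterates starting from [0] increase; the integrated rent
   of the given c-competitive prudent profile is a supersolution bounding
   them all.  Their limit solves the equation by monotone convergence, and
   [c * opt - I >= b 0] because [I] stays below that supersolution. *)

From mathcomp Require Import all_boot all_order all_algebra.
From mathcomp Require Import all_classical all_reals all_analysis.
From mathcomp Require Import measurable_realfun ring zify.
Set Implicit Arguments. Unset Strict Implicit. Unset Printing Implicit Defensive.
Import Order.TTheory GRing.Theory Num.Theory.
Import numFieldNormedType.Exports.
Local Open Scope classical_set_scope.
Local Open Scope ring_scope.

Lemma sumr_by_parts (R : comRingType) (u y : nat -> R) n :
  \sum_(j < n.+1) (u j - u j.+1) * y j =
  u 0%N * y 0%N - u n.+1 * y n - \sum_(j < n) u j.+1 * (y j - y j.+1).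
Proof.
elim: n => [|n IH]; first by rewrite big_ord_recr big_ord0 /= big_ord0; ring.
by rewrite big_ord_recr /= IH [in RHS]big_ord_recr /=; ring.
Qed.

Lemma sumr_supp2 (V : nmodType) n (F : nat -> V) i : (i < n)%N ->
  (forall j, (j <= n)%N -> j != i -> j != i.+1 -> F j = 0) ->
  \sum_(j < n.+1) F j = F i + F i.+1.
Proof.
move=> i_lt F0; rewrite (bigD1 (Ordinal (ltnW i_lt : (i < n.+1)%N))) //=.
rewrite (bigD1 (Ordinal (i_lt : (i.+1 < n.+1)%N))) /=; last first.
  by rewrite -val_eqE /= gtn_eqF.
rewrite big1 ?addr0 // => j /andP[ji ji1]; apply: F0; first by rewrite -ltnS.
- by move: ji; rewrite -val_eqE.
- by move: ji1; rewrite -val_eqE.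
Qed.

Section Clamp.
Variable R : realType.

Definition clamp01 (y : R) : R := Num.min 1 (Num.max 0 y).

Lemma clamp01_ge0 y : 0 <= clamp01 y.
Proof. by rewrite le_min ler01 le_max lexx. Qed.

Lemma clamp01_le1 y : clamp01 y <= 1.
Proof. by rewrite ge_min lexx. Qed.

Lemma clamp01_id y : 0 <= y <= 1 -> clamp01 y = y.
Proof. by case/andP=> y0 y1; rewrite /clamp01 (max_r y0) (min_r y1). Qed.

Lemma clamp01_le0 y : y <= 0 -> clamp01 y = 0.
Proof. by move=> y0; rewrite /clamp01 (max_l y0) (min_r ler01). Qed.

Lemma clamp01_ge1 y : 1 <= y -> clamp01 y = 1.
Proof. by move=> y1; rewrite /clamp01 (max_r (le_trans ler01 y1)) (min_l y1). Qed.

Lemma clamp01_nd : {homo clamp01 : x y / x <= y}.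
Proof. by move=> x y xy; apply: le_min2 => //; apply: le_max2. Qed.

Lemma continuous_clamp01 : continuous clamp01.
Proof.
move=> x.
have : {for x, continuous ((fun=> 1 : R) \min ((fun=> 0 : R) \max (@id R)))}.
  apply: continuous_min; first exact: cst_continuous.
  by apply: continuous_max; first exact: cst_continuous.
exact.
Qed.

End Clamp.

Section PrudentMass.
Variables (R : realType) (k : nat) (b : nat -> R).
Hypothesis b_lt : forall i, (i < k)%N -> b i < b i.+1.

Lemma b_le m n : (m <= n)%N -> (n <= k)%N -> b m <= b n.
Proof.
move=> mn nk; elim: n mn nk => [|n IH]; first by rewrite leqn0 => /eqP ->.
rewrite leq_eqVlt => /orP[/eqP -> //|]; rewrite ltnS => mn nk.
exact/(le_trans (IH mn (ltnW nk)))/ltW/b_lt.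
Qed.

Lemma mean_b_ge (w : nat -> R) :
  (forall j, (j <= k)%N -> 0 <= w j) -> \sum_(j < k.+1) w j = 1 ->
  b 0%N <= \sum_(j < k.+1) w j * b j.
Proof.
move=> w_ge0 w_sum; rewrite -[leLHS]mul1r -w_sum mulr_suml.
by apply: ler_sum => j _; rewrite ler_wpM2l ?w_ge0 ?b_le // -ltnS.
Qed.

Lemma b_step_gt0 j : (0 < j)%N -> (j <= k)%N -> 0 < b j - b j.-1.
Proof. by case: j => // j _ jk; rewrite subr_gt0 b_lt. Qed.

Lemma b_segment x : b 0%N <= x -> x < b k ->
  exists2 i, (i < k)%N & b i <= x <= b i.+1.
Proof.
move=> b0x; have : (k <= k)%N by []; elim: {-2}k => [|m IH] mk xm.
  by move: (lt_le_trans xm b0x); rewrite ltxx.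
have [xb|bx] := ltP x (b m); last by exists m; rewrite // bx ltW.
by have [i im ix] := IH (ltnW mk) xb; exists i => //; exact: ltnW.
Qed.

(* For [b 0 <= x], [tail_mass j x] is the probability of the states [>= j]
   and [state_mass j x] the probability of state [j] in the unique prudent
   distribution whose expected buying cost is [Num.min x (b k)]. *)
Definition tail_mass (j : nat) (x : R) : R :=
  if j == 0%N then 1
  else if (j <= k)%N then clamp01 ((x - b j.-1) / (b j - b j.-1)) else 0.

Definition state_mass (j : nat) (x : R) : R := tail_mass j x - tail_mass j.+1 x.

Lemma tail_mass0 x : tail_mass 0 x = 1.
Proof. by []. Qed.

Lemma tail_mass_gt x j : (k < j)%N -> tail_mass j x = 0.
Proof. by move=> kj; rewrite /tail_mass leqNgt kj; case: j kj. Qed.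

Lemma tail_mass_ge0 j x : 0 <= tail_mass j x.
Proof.
by rewrite /tail_mass; case: ifP => _; [|case: ifP => _; rewrite ?clamp01_ge0].
Qed.

Lemma tail_mass_le1 j x : tail_mass j x <= 1.
Proof.
by rewrite /tail_mass; case: ifP => _; [|case: ifP => _; rewrite ?clamp01_le1].
Qed.

Lemma tail_mass_nd j : {homo tail_mass j : x y / x <= y}.
Proof.
move=> x y xy; rewrite /tail_mass; case: eqP => // /eqP; rewrite -lt0n => j0.
case: ifP => // jk; apply: clamp01_nd.
by rewrite ler_pM2r ?invr_gt0 ?b_step_gt0 // lerB.
Qed.

Lemma continuous_tail_mass j : continuous (tail_mass j).
Proof.
move=> x; rewrite /tail_mass; case: (j == 0%N); first exact: cvg_cst.
case: (j <= k)%N; last exact: cvg_cst.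
apply: (@continuous_comp _ _ _ (fun y => (y - b j.-1) / (b j - b j.-1))).
  by apply: cvgM; [apply: cvgB; [exact: cvg_id|exact: cvg_cst]|exact: cvg_cst].
exact: continuous_clamp01.
Qed.

Lemma tail_mass_eq1 j x : (j <= k)%N -> b j <= x -> tail_mass j x = 1.
Proof.
move=> jk bx; rewrite /tail_mass jk; case: eqP => // /eqP; rewrite -lt0n => j0.
by apply: clamp01_ge1; rewrite ler_pdivlMr ?b_step_gt0 // mul1r lerD2r.
Qed.

Lemma tail_mass_eq0 j x : (0 < j)%N -> x <= b j.-1 -> tail_mass j x = 0.
Proof.
move=> j0 xb; rewrite /tail_mass gtn_eqF //; case: ifP => // jk.
by apply: clamp01_le0; rewrite pmulr_lle0 ?invr_gt0 ?b_step_gt0 // subr_le0.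
Qed.

Lemma tail_mass_seg i x j : (i < k)%N -> b i <= x <= b i.+1 ->
  tail_mass j x = if (j <= i)%N then 1
                  else if j == i.+1 then (x - b i) / (b i.+1 - b i) else 0.
Proof.
move=> ik /andP[bix xbi]; have d := b_step_gt0 (ltn0Sn i) ik.
case: (leqP j i) => [ji|ij].
  by apply: tail_mass_eq1; [lia|exact: le_trans (b_le ji (ltnW ik)) bix].
case: eqP => [->|/eqP ji].
  rewrite /tail_mass ik /=; apply: clamp01_id; apply/andP; split.
    by apply: divr_ge0; [rewrite subr_ge0|exact: ltW].
  by rewrite ler_pdivrMr // mul1r lerD2r.
have [kj|jk] := ltnP k j; first exact: tail_mass_gt.
apply: tail_mass_eq0; first by case: j ij {ji jk}.
by apply: le_trans xbi (b_le _ _); lia.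
Qed.

Lemma state_mass_ge0 j x : 0 <= state_mass j x.
Proof.
rewrite subr_ge0; have [->|j0] := posnP j; first exact: tail_mass_le1.
have [jk|kj] := ltnP j k; last by rewrite tail_mass_gt ?tail_mass_ge0.
have [xb|bx] := leP x (b j); first by rewrite tail_mass_eq0 ?tail_mass_ge0.
by rewrite (tail_mass_eq1 (ltnW jk) (ltW bx)) tail_mass_le1.
Qed.

Lemma sum_state_mass x : \sum_(j < k.+1) state_mass j x = 1.
Proof.
have := @telescope_sumr R 0 k.+1 (tail_mass^~ x) isT; rewrite big_mkord => tele.
under eq_bigr do rewrite /state_mass -opprB.
by rewrite sumrN tele tail_mass_gt // tail_mass0 sub0r opprK.
Qed.

Lemma sum_state_mass_by_parts (y : nat -> R) x :
  \sum_(j < k.+1) state_mass j x * y j =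
  y 0%N - \sum_(j < k) tail_mass j.+1 x * (y j - y j.+1).
Proof.
rewrite (sumr_by_parts (tail_mass^~ x)) (@tail_mass_gt x k.+1) //.
by rewrite mul0r subr0 tail_mass0 mul1r.
Qed.

Lemma continuous_state_mass j : continuous (state_mass j).
Proof. by move=> x; apply: cvgB; exact: continuous_tail_mass. Qed.

Lemma state_mass_seg i x j : (i < k)%N -> b i <= x <= b i.+1 ->
  state_mass j x = if j == i then 1 - (x - b i) / (b i.+1 - b i)
                   else if j == i.+1 then (x - b i) / (b i.+1 - b i) else 0.
Proof.
move=> ik hx; rewrite /state_mass !(tail_mass_seg _ ik hx).
have [ji|ij|->] := ltngtP j i; last by rewrite ?leqnn ?ltnn ?eqxx.
  by rewrite (ltn_eqF (leqW ji)) subrr.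
by rewrite eqSS (gtn_eqF ij) subr0.
Qed.

Lemma state_mass_top x j : (j <= k)%N -> b k <= x ->
  state_mass j x = (j == k)%:R.
Proof.
move=> jk bx; have b_le_x i : (i <= k)%N -> b i <= x.
  by move=> ik; exact: le_trans (b_le ik (leqnn k)) bx.
rewrite /state_mass tail_mass_eq1 ?b_le_x //.
case: eqP => [->|/eqP jk']; first by rewrite tail_mass_gt // subr0.
by rewrite tail_mass_eq1 ?subrr ?b_le_x // ltn_neqAle jk' jk.
Qed.

Lemma sum_state_mass_b x : b 0%N <= x ->
  \sum_(j < k.+1) state_mass j x * b j = Num.min x (b k).
Proof.
move=> b0x; have [bx|xb] := leP (b k) x.
  rewrite big_ord_recr /= state_mass_top // eqxx mul1r.
  rewrite big1 ?add0r // => j _.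
  by rewrite state_mass_top ?(ltn_eqF (ltn_ord j)) ?mul0r // ltnW.
have [i ik hx] := b_segment b0x xb.
rewrite (@sumr_supp2 _ _ (fun j => state_mass j x * b j) i) //; last first.
  move=> j _ /negbTE ji /negbTE ji1.
  by rewrite (state_mass_seg _ ik hx) ji ji1 mul0r.
rewrite !(state_mass_seg _ ik hx) eqxx (gtn_eqF (ltnSn i)) eqxx.
have /lt0r_neq0 d := b_step_gt0 (ltn0Sn i) ik; rewrite /= in d.
by field.
Qed.

Lemma state_mass_support x : b 0%N <= x ->
  exists i, forall j, (j <= k)%N -> 0 < state_mass j x -> j = i \/ j = i.+1.
Proof.
move=> b0x; have [bx|xb] := leP (b k) x.
  exists k => j jk; rewrite state_mass_top //.
  by case: eqP => [->|_]; [left|rewrite ltxx].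
have [i ik hx] := b_segment b0x xb; exists i => j jk.
rewrite (state_mass_seg _ ik hx); case: eqP => [->|_]; first by left.
by case: eqP => [->|_]; [right|rewrite ltxx].
Qed.

Lemma prudent_state_mass (p : nat -> R) i :
  (forall j, (j <= k)%N -> 0 <= p j) -> \sum_(j < k.+1) p j = 1 ->
  (forall j, (j <= k)%N -> 0 < p j -> j = i \/ j = i.+1) ->
  forall j, (j <= k)%N -> state_mass j (\sum_(l < k.+1) p l * b l) = p j.
Proof.
move=> p_ge0 p_sum p_supp.
have p_eq0 j : (j <= k)%N -> j != i -> j != i.+1 -> p j = 0.
  move=> jk /negP ji /negP ji1; apply/eqP; rewrite eq_le p_ge0 // andbT.
  by rewrite leNgt; apply/negP => /(p_supp _ jk) [] /eqP.
have [ik|ki] := ltnP i k; last first.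
  have p_lt j : (j < k)%N -> p j = 0.
    by move=> jk; apply: p_eq0; [exact: ltnW|apply/eqP..]; lia.
  have pk : p k = 1.
    by rewrite -p_sum big_ord_recr /= big1 ?add0r // => j _; exact: p_lt.
  rewrite big_ord_recr /= big1 ?add0r => [j jk|j _]; last by rewrite p_lt ?mul0r.
  rewrite pk mul1r state_mass_top //.
  by case: eqP => [->//|/eqP jk']; rewrite p_lt // ltn_neqAle jk' jk.
have e1 : p i + p i.+1 = 1 by rewrite -p_sum (@sumr_supp2 _ _ _ i).
have d := b_step_gt0 (ltn0Sn i) ik; rewrite /= in d.
have xE : \sum_(l < k.+1) p l * b l = b i + p i.+1 * (b i.+1 - b i).
  rewrite (@sumr_supp2 _ _ (fun l => p l * b l) i) => [|//|l lk li li1].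
      by rewrite -[p i](addrK (p i.+1)) e1; ring.
  by rewrite p_eq0 ?mul0r.
have hx : b i <= \sum_(l < k.+1) p l * b l <= b i.+1.
  rewrite xE lerDl mulr_ge0 ?p_ge0 ?(ltW d) //= -lerBrDl ger_pMl //.
  by rewrite -e1 lerDr p_ge0 // ltnW.
move=> j jk; rewrite (state_mass_seg _ ik hx) xE addrAC subrr add0r.
rewrite (mulfK (lt0r_neq0 d)).
case: eqP => [->|/eqP ji]; first by rewrite -e1 addrK.
by case: eqP => [->//|/eqP ji1]; rewrite p_eq0.
Qed.

End PrudentMass.

Section PrudentRate.
Variables (R : realType) (k : nat) (b r : nat -> R).
Hypothesis b_lt : forall i, (i < k)%N -> b i < b i.+1.
Hypothesis r_lt : forall i, (i < k)%N -> r i.+1 < r i.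
Hypothesis r_k_ge0 : 0 <= r k.

Definition prudent_rate (x : R) : R := \sum_(j < k.+1) state_mass k b j x * r j.

Lemma r_le m n : (m <= n)%N -> (n <= k)%N -> r n <= r m.
Proof.
have oppr_lt i : (i < k)%N -> - r i < - r i.+1 by move=> ik; rewrite ltrN2 r_lt.
by move=> mn nk; rewrite -lerN2; exact: (b_le oppr_lt mn nk).
Qed.

Lemma r_ge0 j : (j <= k)%N -> 0 <= r j.
Proof. by move=> jk; exact: le_trans r_k_ge0 (r_le jk (leqnn k)). Qed.

Lemma mean_r_bnd (w : nat -> R) :
  (forall j, (j <= k)%N -> 0 <= w j) -> \sum_(j < k.+1) w j = 1 ->
  0 <= \sum_(j < k.+1) w j * r j <= r 0%N.
Proof.
move=> w_ge0 w_sum; apply/andP; split.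
  by apply: sumr_ge0 => j _; rewrite mulr_ge0 ?w_ge0 ?r_ge0 // -ltnS.
rewrite -[leRHS]mul1r -w_sum mulr_suml.
by apply: ler_sum => j _; rewrite ler_wpM2l ?w_ge0 ?r_le // -ltnS.
Qed.

Lemma prudent_rate_bnd x : 0 <= prudent_rate x <= r 0%N.
Proof.
rewrite /prudent_rate; apply: (@mean_r_bnd (state_mass k b ^~ x)) => [j _|].
  exact: state_mass_ge0.
exact: sum_state_mass.
Qed.

Lemma prudent_rate_noninc : {homo prudent_rate : x y /~ x <= y}.
Proof.
move=> x y xy; rewrite /prudent_rate !sum_state_mass_by_parts lerB //.
apply: ler_sum => j _; rewrite ler_wpM2r ?subr_ge0 ?(ltW (r_lt _)) //.
exact: tail_mass_nd.
Qed.

Lemma continuous_prudent_rate : continuous prudent_rate.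
Proof.
move=> x; apply: cvg_big => [|j _]; first exact: add_continuous.
by apply: cvgM; [exact: continuous_state_mass|exact: cvg_cst].
Qed.

Lemma prudent_rate_prudent (p : nat -> R) i :
  (forall j, (j <= k)%N -> 0 <= p j) -> \sum_(j < k.+1) p j = 1 ->
  (forall j, (j <= k)%N -> 0 < p j -> j = i \/ j = i.+1) ->
  prudent_rate (\sum_(l < k.+1) p l * b l) = \sum_(l < k.+1) p l * r l.
Proof.
move=> p_ge0 p_sum p_supp; apply: eq_bigr => j _.
by rewrite (prudent_state_mass b_lt p_ge0 p_sum p_supp) // -ltnS.
Qed.

End PrudentRate.

Section IntegralFrom0.
Variable R : realType.
Implicit Types (f : R -> R) (M t : R).

Definition int0 t f : R := Rintegral lebesgue_measure `[0, t] f.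

Lemma in_itv0 t s : [set` `[0, t]] s -> 0 <= s <= t.
Proof. by rewrite /= in_itv. Qed.

Lemma integrable_itv0 f M t : measurable_fun setT f ->
  (forall s, 0 <= s -> 0 <= f s <= M) ->
  lebesgue_measure.-integrable `[0, t] (EFin \o f).
Proof.
move=> mf fM.
have fin : ((@lebesgue_measure R) `[0%R, t] < +oo)%E.
  by rewrite lebesgue_measure_itv; case: ifP => _; rewrite ?ltry.
apply: measurable_bounded_integrable => //; first exact: measurable_funS mf.
exists M; split; first exact: num_real.
move=> x Mx y /in_itv0 /andP[y0 _]; have /andP[fy0 fyM] := fM y y0.
by rewrite /= ger0_norm // (le_trans fyM (ltW Mx)).
Qed.

Lemma int0_ge0 f t : (forall s, 0 <= s -> 0 <= f s) -> 0 <= int0 t f.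
Proof. by move=> f0; apply: Rintegral_ge0 => s /in_itv0 /andP[/f0]. Qed.

Lemma le_int0 f1 f2 M t : measurable_fun setT f1 -> measurable_fun setT f2 ->
  (forall s, 0 <= s -> 0 <= f1 s <= M) -> (forall s, 0 <= s -> 0 <= f2 s <= M) ->
  (forall s, 0 <= s <= t -> f1 s <= f2 s) -> int0 t f1 <= int0 t f2.
Proof.
move=> mf1 mf2 f1M f2M f12.
apply: le_Rintegral => //; first exact: integrable_itv0 f1M.
exact: integrable_itv0 f2M.
Qed.

Lemma int0_nd f M : measurable_fun setT f ->
  (forall s, 0 <= s -> 0 <= f s <= M) -> {homo int0^~ f : t t' / t <= t'}.
Proof.
move=> mf fM t t' tt'; rewrite /int0 /Rintegral fine_le //.
- by apply: integrable_fin_num => //; exact: integrable_itv0 fM.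
- by apply: integrable_fin_num => //; exact: integrable_itv0 fM.
apply: ge0_subset_integral => //.
- by apply/measurable_EFinP; exact: measurable_funS mf.
- by move=> s /in_itv0 /andP[/fM /andP[]]; rewrite lee_fin.
- by move=> s /in_itv0 /andP[s0 st]; rewrite /= in_itv /= s0 (le_trans st).
Qed.

Lemma cvg_int0_nondecreasing (f_ : nat -> R -> R) f M t :
  (forall n, measurable_fun setT (f_ n)) ->
  (forall n s, 0 <= s -> 0 <= f_ n s <= M) ->
  (forall s, 0 <= s -> {homo f_^~ s : n m / (n <= m)%N >-> n <= m}) ->
  (forall s, 0 <= s -> f_ n s @[n --> \oo] --> f s) ->
  measurable_fun setT f -> (forall s, 0 <= s -> 0 <= f s <= M) ->
  int0 t (f_ n) @[n --> \oo] --> int0 t f.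
Proof.
move=> mf_ f_M f_nd f_cvg mf fM; apply: fine_cvg.
rewrite fineK; last by apply: integrable_fin_num => //; exact: integrable_itv0 fM.
have -> : (\int[lebesgue_measure]_(x in `[0%R, t]) (f x)%:E)%E =
    (\int[lebesgue_measure]_(x in `[0%R, t]) limn (fun n => (f_ n x)%:E))%E.
  apply: eq_integral => s; rewrite inE => /in_itv0 /andP[s0 _].
  by rewrite EFin_lim; [rewrite (cvg_lim _ (f_cvg s s0))|exact: cvgP (f_cvg s s0)].
apply: cvg_monotone_convergence => //.
- by move=> n; apply/measurable_EFinP; exact: measurable_funS (mf_ n).
- by move=> n s /in_itv0 /andP[/(f_M n) /andP[]]; rewrite lee_fin.
- by move=> s /in_itv0 /andP[s0 _] n m nm; rewrite lee_fin f_nd.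
Qed.

End IntegralFrom0.

Section PicardIteration.
Variables (R : realType) (g h f : R -> R) (M : R).
Hypothesis g_noninc : {homo g : x y /~ x <= y}.
Hypothesis g_cont : continuous g.
Hypothesis g_bnd : forall x, 0 <= g x <= M.
Hypothesis h_meas : measurable_fun setT h.
Hypothesis f_meas : measurable_fun setT f.
Hypothesis f_bnd : forall s, 0 <= s -> 0 <= f s <= M.
(* [int0 _ f] is a supersolution of the fixpoint equation below. *)
Hypothesis f_super : forall s, 0 <= s -> g (h s - int0 s f) <= f s.

Definition picard_step (I : R -> R) (t : R) : R :=
  int0 t (fun s => g (h s - I s)).

Fixpoint picard (n : nat) : R -> R :=
  if n is n'.+1 then picard_step (picard n') else fun=> 0.

Definition picard_lim (t : R) : R := sup (range (picard^~ t)).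

Lemma measurable_picard_integrand I : {homo I : x y / x <= y} ->
  measurable_fun setT (fun s => g (h s - I s)).
Proof.
move=> I_nd; apply: measurableT_comp; first exact: continuous_measurable_fun.
by apply: measurable_funB => //; exact: nondecreasing_measurable.
Qed.

Lemma picard_step_nd I : {homo I : x y / x <= y} ->
  {homo picard_step I : x y / x <= y}.
Proof.
by move=> I_nd; apply: int0_nd (measurable_picard_integrand I_nd) _ => s _.
Qed.

Lemma le_picard_step I J t :
  {homo I : x y / x <= y} -> {homo J : x y / x <= y} ->
  (forall s, 0 <= s -> I s <= J s) -> picard_step I t <= picard_step J t.
Proof.
move=> I_nd J_nd IJ; apply: le_int0 (measurable_picard_integrand I_nd)
  (measurable_picard_integrand J_nd) _ _ _ => // s /andP[s0 _].
by apply: g_noninc; rewrite lerB // IJ.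
Qed.

Lemma picard_nd n : {homo picard n : x y / x <= y}.
Proof. by elim: n => [x y _ /=|n IH]; [exact: lexx|exact: picard_step_nd]. Qed.

Lemma picard_le_succ n t : picard n t <= picard n.+1 t.
Proof.
elim: n t => [|n IH] t.
  by apply: int0_ge0 => s _; case/andP: (g_bnd (h s - 0)).
apply: le_picard_step => [||s _]; last exact: IH.
  exact: (picard_nd n).
exact: (picard_nd n.+1).
Qed.

Lemma picard_nondecreasing t : {homo picard^~ t : n m / (n <= m)%N >-> n <= m}.
Proof. by apply/nondecreasing_seqP => n; exact: picard_le_succ. Qed.

Lemma picard_le_int0 n t : picard n t <= int0 t f.
Proof.
elim: n t => [|n IH] t; first by apply: int0_ge0 => s /f_bnd /andP[].
apply: le_int0 (measurable_picard_integrand (picard_nd n)) f_meas _ f_bnd _ => //.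
move=> s /andP[s0 _]; apply: le_trans (f_super s0).
by apply: g_noninc; rewrite lerB.
Qed.

Lemma picard_bounded t : has_ubound (range (picard^~ t)).
Proof. by exists (int0 t f) => _ [n _ <-]; exact: picard_le_int0. Qed.

Lemma picard_cvg t : picard n t @[n --> \oo] --> picard_lim t.
Proof.
by apply: nondecreasing_cvgn; [exact: picard_nondecreasing|exact: picard_bounded].
Qed.

Lemma picard_lim_le_int0 t : picard_lim t <= int0 t f.
Proof.
apply: ge_sup; first by exists (picard 0 t), 0%N.
by move=> _ [n _ <-]; exact: picard_le_int0.
Qed.

Lemma picard_lim_nd : {homo picard_lim : x y / x <= y}.
Proof.
move=> x y xy; apply: ge_sup; first by exists (picard 0 x), 0%N.
move=> _ [n _ <-]; apply: le_trans (picard_nd n xy) _.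
by apply: ub_le_sup; [exact: picard_bounded|exists n].
Qed.

Lemma picard_lim_fixpoint t : picard_lim t = picard_step picard_lim t.
Proof.
have lim_shift : picard n.+1 t @[n --> \oo] --> picard_lim t.
  have := cvg_shiftS (picard^~ t) (nbhs (picard_lim t)); rewrite /= => ->.
  exact: picard_cvg.
have lim_step : picard n.+1 t @[n --> \oo] --> picard_step picard_lim t.
  apply: cvg_int0_nondecreasing => //.
  - by move=> n; exact: measurable_picard_integrand (picard_nd n).
  - by move=> s _ n m nm; apply: g_noninc; rewrite lerB // picard_nondecreasing.
  - move=> s _; apply: continuous_cvg; first exact: g_cont.
    by apply: cvgB; [exact: cvg_cst|exact: picard_cvg].
  - exact: measurable_picard_integrand picard_lim_nd.
exact: cvg_unique lim_shift lim_step.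
Qed.

Lemma picard_fixpoint_exists :
  exists I : R -> R, [/\ {homo I : x y / x <= y}, forall t, I t <= int0 t f
                       & forall t, I t = int0 t (fun s => g (h s - I s))].
Proof.
exists picard_lim; split; [exact: picard_lim_nd|exact: picard_lim_le_int0|].
exact: picard_lim_fixpoint.
Qed.

End PicardIteration.

Section Profiles.
Variables (R : realType) (k : nat) (b r : nat -> R) (c : R).
Hypothesis b_lt : forall i, (i < k)%N -> b i < b i.+1.
Hypothesis r_lt : forall i, (i < k)%N -> r i.+1 < r i.
Hypothesis r_k_ge0 : 0 <= r k.

Lemma X_pE p t : X_p k b r p t = B_p k b p t + int0 t (R_p k r p).
Proof. by []. Qed.

Lemma opt_nd : {homo opt k b r : x y / x <= y}.
Proof.
move=> x y xy; rewrite /opt; elim/big_rec2: _ => [|i u v _ uv].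
  by rewrite lerD2l ler_wpM2l // (r_ge0 r_lt r_k_ge0).
apply: le_min2 => //; rewrite lerD2l ler_wpM2l // (r_ge0 r_lt r_k_ge0) //.
by rewrite -ltnS.
Qed.

Lemma measurable_c_opt : measurable_fun setT (fun t => c * opt k b r t).
Proof.
apply: measurable_funM; first exact: measurable_cst.
exact: nondecreasing_measurable opt_nd.
Qed.

Section ProfileFacts.
Variable p : nat -> R -> R.
Hypothesis p_profile : profile k p.

Lemma measurable_R_p : measurable_fun setT (R_p k r p).
Proof.
apply: measurable_sum => i; apply: measurable_funM; last exact: measurable_cst.
by apply: p_profile.1; rewrite -ltnS.
Qed.

Lemma R_p_bnd s : 0 <= s -> 0 <= R_p k r p s <= r 0%N.
Proof.
have [_ [p_ge0 p_sum]] := p_profile => s0.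
rewrite /R_p; apply: (mean_r_bnd r_lt r_k_ge0 (w := p^~ s)) (p_sum s s0).
by move=> j jk; exact: p_ge0.
Qed.

Lemma B_p_ge s : 0 <= s -> b 0%N <= B_p k b p s.
Proof.
have [_ [p_ge0 p_sum]] := p_profile => s0.
rewrite /B_p; apply: (mean_b_ge b_lt (w := p^~ s)) (p_sum s s0).
by move=> j jk; exact: p_ge0.
Qed.

End ProfileFacts.

Lemma R_p_prudent p s : prudent k p -> 0 <= s ->
  R_p k r p s = prudent_rate k b r (B_p k b p s).
Proof.
move=> [[_ [p_ge0 p_sum]] p_supp] s0; have [i supp_i] := p_supp s s0.
have p_ge0_s j : (j <= k)%N -> 0 <= p j s by move=> jk; exact: p_ge0.
by rewrite (prudent_rate_prudent r b_lt p_ge0_s (p_sum s s0) supp_i).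
Qed.

Definition tight_profile (I : R -> R) (j : nat) (t : R) : R :=
  state_mass k b j (c * opt k b r t - I t).

Lemma tight_profile_tight (I : R -> R) : {homo I : x y / x <= y} ->
  (forall t, 0 <= t -> b 0%N <= c * opt k b r t - I t) ->
  (forall t, I t = int0 t (fun s => prudent_rate k b r (c * opt k b r s - I s))) ->
  tight k b r c (tight_profile I).
Proof.
move=> I_nd I_b0 I_fix; set q := tight_profile I.
have q_profile : profile k q.
  split; last split=> [j t _ _|t _]; [|exact: state_mass_ge0|exact: sum_state_mass].
  move=> j _; have mI := nondecreasing_measurable measurableT I_nd.
  have m_mass := continuous_measurable_fun (@continuous_state_mass R k b j).
  exact (measurableT_comp m_mass (measurable_funB measurable_c_opt mI)).
have q_prudent : prudent k q.
  by split=> // t t0; exact: state_mass_support (I_b0 t t0).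
have X_qE t : 0 <= t ->
    X_p k b r q t = Num.min (c * opt k b r t - I t) (b k) + I t.
  move=> t0; rewrite X_pE /B_p /q /tight_profile.
  rewrite (sum_state_mass_b b_lt (I_b0 t t0)).
  by congr (_ + _); exact: esym (I_fix t).
split=> //; split.
  by split=> // t t0; rewrite X_qE // -lerBrDr ge_min lexx.
move=> t t0 qk_lt1; rewrite X_qE // min_l ?subrK //.
rewrite leNgt; apply: contraL qk_lt1 => /ltW bk.
by rewrite /q /tight_profile state_mass_top // eqxx ltxx.
Qed.

End Profiles.

Theorem lemma4p5 (R : realType) (k : nat) (b r : nat -> R) (c : R) :
  valid_instance k b r -> 1 <= c ->
  (exists p, prudent k p /\ competitive k b r c p) ->
  exists q, tight k b r c q.
Proof.
move=> [_ [b_lt [r_lt [r_k_ge0 _]]]] _ [p [p_prudent [p_profile p_comp]]].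
have B_p_le s : 0 <= s -> B_p k b p s <= c * opt k b r s - int0 s (R_p k r p).
  by move=> s0; rewrite lerBrDr -X_pE p_comp.
have R_p_ge s : 0 <= s ->
    prudent_rate k b r (c * opt k b r s - int0 s (R_p k r p)) <= R_p k r p s.
  move=> s0; rewrite (R_p_prudent r b_lt p_prudent s0).
  exact: prudent_rate_noninc (B_p_le s s0).
have [I [I_nd I_le I_fix]] := picard_fixpoint_exists
  (prudent_rate_noninc b_lt r_lt) (@continuous_prudent_rate R k b r)
  (prudent_rate_bnd b_lt r_lt r_k_ge0) (measurable_c_opt b c r_lt r_k_ge0)
  (measurable_R_p r p_profile) (R_p_bnd r_lt r_k_ge0 p_profile) R_p_ge.
exists (tight_profile k b r c I); apply: tight_profile_tight => // t t0.
apply: le_trans (B_p_ge b_lt p_profile t0) (le_trans (B_p_le t t0) _).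
by rewrite lerB.
Qed.
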